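(* In the two-source game ($m=2$) with $n_1\ge n_2$ and $n=n_1+n_2$, if $n_1\bar q<q\mu/\phi+n_2+\bar q$ and $q>\frac{2}{n}$, then the unique (pure) Nash equilibrium is the profile in which all users choose the direct path, i.e., $u_1=n_1$, $u_2=n_2$.
   Context: Two-source network: sources $s_1,s_2$ and destination $d$; source $s_i$ has a set $N_i$ of $n_i$ users. Each user generates an independent Poisson flow of packets of rate $\phi>0$; each direct link $(s_i,d)$ has service rate $\mu>0$; the sidelink between $s_1$ and $s_2$ loses packets independently with probability $q\in[0,1]$, and $\bar q=1-q$. Only pure strategies: a user of $N_1$ chooses DP $(s_1,d)$ or IP $(s_1,s_2,d)$; a user of $N_2$ chooses DP $(s_2,d)$ or IP $(s_2,s_1,d)$. With $u_i$ users of $N_i$ on DP, $T_1=u_1\phi+(n_2-u_2)\bar q\phi$, $T_2=u_2\phi+(n_1-u_1)\bar q\phi$. The loss rate of a user of $N_i$ is $\phi\frac{T_i}{T_i+\mu}$ on DP and $\phi\left(q+\bar q\frac{T_j}{T_j+\mu}\right)$ on IP to $s_j$. A Nash equilibrium is a pure profile in which no user can strictly decrease its loss rate by unilaterally switching its route. *)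

From mathcomp Require Import all_boot all_order all_algebra.
Set Implicit Arguments. Unset Strict Implicit. Unset Printing Implicit Defensive.
Import Order.TTheory GRing.Theory Num.Theory.
Local Open Scope ring_scope.

(* Users of N_i are indexed by 'I_n_i; a pure profile for
   source i is s_i : {ffun 'I_n_i -> bool}, where true = direct path (DP),
   false = indirect path (IP) via the other source. *)

Section TwoSource.
Variables (R : realFieldType) (n1 n2 : nat) (phi mu q : R).

Definition qbar : R := 1 - q.

Definition ndp (n : nat) (s : {ffun 'I_n -> bool}) : nat := #|[set i | s i]|.

Definition T1 (s1 : {ffun 'I_n1 -> bool}) (s2 : {ffun 'I_n2 -> bool}) : R :=
  (ndp s1)%:R * phi + (n2 - ndp s2)%:R * qbar * phi.
Definition T2 (s1 : {ffun 'I_n1 -> bool}) (s2 : {ffun 'I_n2 -> bool}) : R :=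
  (ndp s2)%:R * phi + (n1 - ndp s1)%:R * qbar * phi.

Definition loss_dp (T : R) : R := phi * (T / (T + mu)).
Definition loss_ip (T' : R) : R := phi * (q + qbar * (T' / (T' + mu))).

Definition loss1 (s1 : {ffun 'I_n1 -> bool}) (s2 : {ffun 'I_n2 -> bool})
  (i : 'I_n1) : R :=
  if s1 i then loss_dp (T1 s1 s2) else loss_ip (T2 s1 s2).
Definition loss2 (s1 : {ffun 'I_n1 -> bool}) (s2 : {ffun 'I_n2 -> bool})
  (i : 'I_n2) : R :=
  if s2 i then loss_dp (T2 s1 s2) else loss_ip (T1 s1 s2).

Definition upd (n : nat) (s : {ffun 'I_n -> bool}) (i : 'I_n) (b : bool)
  : {ffun 'I_n -> bool} := [ffun j => if j == i then b else s j].

Definition is_NE (s1 : {ffun 'I_n1 -> bool}) (s2 : {ffun 'I_n2 -> bool}) : Prop :=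
  (forall (i : 'I_n1) (b : bool), ~ (loss1 (upd s1 i b) s2 i < loss1 s1 s2 i)) /\
  (forall (i : 'I_n2) (b : bool), ~ (loss2 s1 (upd s2 i b) i < loss2 s1 s2 i)).

End TwoSource.

From mathcomp Require Import all_boot all_order all_algebra.
From mathcomp Require Import ring lra.
Set Implicit Arguments. Unset Strict Implicit. Unset Printing Implicit Defensive.
Import Order.TTheory GRing.Theory Num.Theory.
Local Open Scope ring_scope.

(* Comparing the two routes reduces to a linear inequality between loads: a
   user whose direct path carries load A and whose indirect path leads to a
   source with load B strictly prefers IP iff B + mu < qbar (A + mu).
   When everybody uses DP, the hypothesis on n1 qbar is exactly what keeps a
   user of N1 on DP, and n2 <= n1 keeps the users of N2 there.  Conversely,
   in an equilibrium every IP user of N_i has T_j + mu <= qbar (T_i + phi + mu).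
   If both sources have IP users, adding the two inequalities and using
   T_1 + T_2 >= n qbar phi gives q n < 2; if only N1 (resp. N2) has IP users,
   the inequality contradicts the hypothesis on n1 qbar (resp. n2 <= n1). *)

Local Notation profile n := {ffun 'I_n -> bool}.

Section DirectPathCount.
Variable n : nat.
Implicit Types (s : profile n) (i : 'I_n) (b : bool).

Lemma ndp_le s : (ndp s <= n)%N.
Proof. by rewrite /ndp (leq_trans (max_card _)) ?card_ord. Qed.

Lemma ndp_all s : (forall i, s i) -> ndp s = n.
Proof.
move=> dp; rewrite /ndp -[n in RHS]card_ord -cardsT.
by congr #|pred_of_set _|; apply/setP => i; rewrite !inE dp.
Qed.

Lemma upd_eq s i b : upd s i b i = b.
Proof. by rewrite ffunE eqxx. Qed.

Lemma upd_id s i : upd s i (s i) = s.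
Proof. by apply/ffunP => j; rewrite ffunE; case: eqP => [->|]. Qed.

Lemma ndp_upd s i b : (ndp (upd s i b) + s i = ndp s + b)%N.
Proof.
rewrite /ndp (cardsD1 i [set j | s j]) (cardsD1 i [set j | upd s i b j]) !inE upd_eq.
have -> : [set j | upd s i b j] :\ i = [set j | s j] :\ i.
  by apply/setP => j; rewrite !inE ffunE; case: eqP.
by ring.
Qed.

Lemma ndp_lt s i : ~~ s i -> (ndp s < n)%N.
Proof.
move/negbTE=> ip; have := ndp_upd s i true; rewrite ip addn0 addn1 => <-.
exact: ndp_le.
Qed.

End DirectPathCount.

Section LossComparison.
Variables (R : realFieldType) (phi mu q : R).
Hypotheses (phi_gt0 : 0 < phi) (mu_gt0 : 0 < mu).
Variables (A B : R).
Hypotheses (A_mu_gt0 : 0 < A + mu) (B_mu_gt0 : 0 < B + mu).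

Lemma loss_dp_subr_ip : loss_dp phi mu A - loss_ip phi mu q B =
  phi * mu * (qbar q * (A + mu) - (B + mu)) / ((A + mu) * (B + mu)).
Proof.
have [Amu0 Bmu0] := (lt0r_neq0 A_mu_gt0, lt0r_neq0 B_mu_gt0).
rewrite /loss_dp /loss_ip /qbar; field.
by rewrite Amu0 Bmu0.
Qed.

Let scale_gt0 : 0 < phi * mu / ((A + mu) * (B + mu)).
Proof. by rewrite divr_gt0 ?mulr_gt0. Qed.

Lemma loss_dp_lt_ip :
  (loss_dp phi mu A < loss_ip phi mu q B) = (qbar q * (A + mu) < B + mu).
Proof.
by rewrite -subr_lt0 loss_dp_subr_ip mulrAC pmulr_rlt0 // subr_lt0.
Qed.

Lemma loss_ip_lt_dp :
  (loss_ip phi mu q B < loss_dp phi mu A) = (B + mu < qbar q * (A + mu)).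
Proof.
by rewrite -subr_gt0 loss_dp_subr_ip mulrAC pmulr_rgt0 // subr_gt0.
Qed.

End LossComparison.

Section Stability.
Variables (R : realFieldType) (phi mu q : R).

Lemma T2_T1 {n1 n2 : nat} (s1 : profile n1) (s2 : profile n2) :
  T2 phi q s1 s2 = T1 phi q s2 s1.
Proof. by []. Qed.

Lemma T1E {n1 n2 : nat} (s1 : profile n1) (s2 : profile n2) :
  T1 phi q s1 s2 = (ndp s1)%:R * phi + (n2%:R - (ndp s2)%:R) * qbar q * phi.
Proof. by rewrite /T1 natrB ?ndp_le. Qed.

Lemma T2E {n1 n2 : nat} (s1 : profile n1) (s2 : profile n2) :
  T2 phi q s1 s2 = (ndp s2)%:R * phi + (n1%:R - (ndp s1)%:R) * qbar q * phi.
Proof. exact: T1E. Qed.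

Lemma T1_upd {n1 n2 : nat} (s1 : profile n1) (s2 : profile n2) i b :
  T1 phi q (upd s1 i b) s2 = T1 phi q s1 s2 + (b%:R - (s1 i)%:R) * phi.
Proof.
have := congr1 (fun m => m%:R : R) (ndp_upd s1 i b); rewrite !natrD => upd_eqn.
rewrite !T1E -[(ndp (upd s1 i b))%:R](addrK (s1 i)%:R) upd_eqn; ring.
Qed.

Lemma T2_upd {n1 n2 : nat} (s1 : profile n1) (s2 : profile n2) i b :
  T2 phi q (upd s1 i b) s2 = T2 phi q s1 s2 + ((s1 i)%:R - b%:R) * qbar q * phi.
Proof.
have := congr1 (fun m => m%:R : R) (ndp_upd s1 i b); rewrite !natrD => upd_eqn.
rewrite !T2E -[(ndp (upd s1 i b))%:R](addrK (s1 i)%:R) upd_eqn; ring.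
Qed.

Lemma T1_add_T2 {n1 n2 : nat} (s1 : profile n1) (s2 : profile n2) :
  T1 phi q s1 s2 + T2 phi q s1 s2 =
  (ndp s1 + ndp s2)%:R * q * phi + (n1 + n2)%:R * qbar q * phi.
Proof. by rewrite T1E T2E !natrD /qbar; ring. Qed.

Lemma T1_all_dp {n1 n2 : nat} (s1 : profile n1) (s2 : profile n2) :
  (forall i, s1 i) -> (forall j, s2 j) -> T1 phi q s1 s2 = n1%:R * phi.
Proof. by move=> dp1 dp2; rewrite T1E !ndp_all // subrr mul0r mul0r addr0. Qed.

Hypotheses (phi_gt0 : 0 < phi) (mu_gt0 : 0 < mu) (q_ge0 : 0 <= q) (q_le1 : q <= 1).

Let qbar_ge0 : 0 <= qbar q. Proof. by rewrite subr_ge0. Qed.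

Lemma T1_ge0 {n1 n2 : nat} (s1 : profile n1) (s2 : profile n2) : 0 <= T1 phi q s1 s2.
Proof. by rewrite /T1 addr_ge0 ?mulr_ge0 ?ler0n ?qbar_ge0 ?ltW. Qed.

Lemma T2_ge0 {n1 n2 : nat} (s1 : profile n1) (s2 : profile n2) : 0 <= T2 phi q s1 s2.
Proof. exact: T1_ge0. Qed.

Lemma loss1_switch_to_dp {n1 n2 : nat} (s1 : profile n1) (s2 : profile n2) i :
  ~~ s1 i ->
  (loss1 phi mu q (upd s1 i true) s2 i < loss1 phi mu q s1 s2 i) =
  (qbar q * (T1 phi q s1 s2 + phi + mu) < T2 phi q s1 s2 + mu).
Proof.
move/negbTE=> ip; rewrite /loss1 upd_eq ip T1_upd ip subr0 mul1r loss_dp_lt_ip //.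
  by rewrite ltr_wpDl // addr_ge0 ?T1_ge0 ?ltW.
by rewrite ltr_wpDl ?T2_ge0.
Qed.

Lemma loss1_switch_to_ip {n1 n2 : nat} (s1 : profile n1) (s2 : profile n2) i :
  s1 i ->
  (loss1 phi mu q (upd s1 i false) s2 i < loss1 phi mu q s1 s2 i) =
  (T2 phi q s1 s2 + qbar q * phi + mu < qbar q * (T1 phi q s1 s2 + mu)).
Proof.
move=> dp; rewrite /loss1 upd_eq dp T2_upd dp subr0 mul1r loss_ip_lt_dp //.
  by rewrite ltr_wpDl ?T1_ge0.
by rewrite ltr_wpDl // addr_ge0 ?T2_ge0 ?mulr_ge0 ?qbar_ge0 ?ltW.
Qed.

Definition source1_stable {n1 n2 : nat} (s1 : profile n1) (s2 : profile n2) : Prop :=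
  forall i b, ~ (loss1 phi mu q (upd s1 i b) s2 i < loss1 phi mu q s1 s2 i).

(* loss2 and T2 are loss1 and T1 of the game with the two sources exchanged. *)
Lemma is_NE_stable {n1 n2 : nat} (s1 : profile n1) (s2 : profile n2) :
  is_NE phi mu q s1 s2 <-> source1_stable s1 s2 /\ source1_stable s2 s1.
Proof. exact: iff_refl. Qed.

Lemma stable_ip_user {n1 n2 : nat} (s1 : profile n1) (s2 : profile n2) i :
  source1_stable s1 s2 -> ~~ s1 i ->
  T2 phi q s1 s2 + mu <= qbar q * (T1 phi q s1 s2 + phi + mu).
Proof.
by move=> st ip; have := st i true; rewrite loss1_switch_to_dp // leNgt => /negP.
Qed.

Lemma all_dp_stable {n1 n2 : nat} (s1 : profile n1) (s2 : profile n2) :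
  (forall i, s1 i) -> (forall j, s2 j) ->
  n1%:R * qbar q * phi <= n2%:R * phi + qbar q * phi + q * mu ->
  source1_stable s1 s2.
Proof.
move=> dp1 dp2 le_n1 i [|]; first by rewrite -(dp1 i) upd_id ltxx.
apply/negP; rewrite loss1_switch_to_ip // T2_T1 !T1_all_dp // -leNgt.
by move: le_n1; rewrite /qbar; lra.
Qed.

Lemma stable_ip_user_dp_other {n1 n2 : nat} (s1 : profile n1) (s2 : profile n2) i :
  source1_stable s1 s2 -> ~~ s1 i -> (forall j, s2 j) ->
  n2%:R * phi + q * mu <= (n1%:R - 1) * qbar q * phi.
Proof.
move=> st ip dp2; have := stable_ip_user st ip.
have lt_n1 : (ndp s1)%:R + 1 <= n1%:R :> R by rewrite natr1 ler_nat (ndp_lt ip).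
have : 0 <= (n1%:R - (ndp s1)%:R - 1) * (qbar q * phi).
  by apply: mulr_ge0; [lra | rewrite mulr_ge0 ?qbar_ge0 ?ltW].
rewrite T1E T2E (ndp_all dp2) /qbar; lra.
Qed.

Lemma stable_ip_users_both {n1 n2 : nat} (s1 : profile n1) (s2 : profile n2) i j :
  source1_stable s1 s2 -> source1_stable s2 s1 -> ~~ s1 i -> ~~ s2 j ->
  q * (n1 + n2)%:R < 2.
Proof.
move=> st1 st2 ip1 ip2; rewrite ltNge; apply/negP => ge2.
have q_gt0 : 0 < q.
  by rewrite lt_neqAle q_ge0 andbT; apply: contraTneq ge2 => <-; rewrite mul0r -ltNge.
have h1 := stable_ip_user st1 ip1.
have h2 : T1 phi q s1 s2 + mu <= qbar q * (T2 phi q s1 s2 + phi + mu).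
  exact: stable_ip_user st2 ip2.
have : q * (T1 phi q s1 s2 + T2 phi q s1 s2 + 2 * mu) <= 2 * qbar q * phi.
  by move: h1 h2; rewrite /qbar; lra.
have : 0 <= q * ((ndp s1 + ndp s2)%:R * q * phi) by rewrite !mulr_ge0 ?ler0n // ltW.
have : 0 <= (q * (n1 + n2)%:R - 2) * (qbar q * phi).
  by rewrite !mulr_ge0 ?subr_ge0 ?qbar_ge0 // ltW.
have : 0 < q * mu by rewrite mulr_gt0.
by rewrite T1_add_T2; lra.
Qed.

Lemma all_dp_is_NE {n1 n2 : nat} (s1 : profile n1) (s2 : profile n2) :
  (n2 <= n1)%N -> (n1%:R - 1) * qbar q * phi < n2%:R * phi + q * mu ->
  (forall i, s1 i) -> (forall j, s2 j) -> is_NE phi mu q s1 s2.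
Proof.
move=> le_n21 balance dp1 dp2.
apply/is_NE_stable; split; apply: all_dp_stable => //; first by move: balance; lra.
have : n2%:R * phi <= n1%:R * phi by rewrite ler_pM2r // ler_nat.
have : 0 <= n2%:R * q * phi by rewrite !mulr_ge0 ?ler0n // ltW.
have : 0 <= q * mu by rewrite mulr_ge0 // ltW.
have : 0 <= qbar q * phi by rewrite mulr_ge0 ?qbar_ge0 // ltW.
by rewrite /qbar; lra.
Qed.

Lemma is_NE_all_dp {n1 n2 : nat} (s1 : profile n1) (s2 : profile n2) :
  (n2 <= n1)%N -> (n1%:R - 1) * qbar q * phi < n2%:R * phi + q * mu ->
  2 / (n1 + n2)%:R < q ->
  is_NE phi mu q s1 s2 -> (forall i, s1 i) /\ (forall j, s2 j).
Proof.
move=> le_n21 balance lt_q /is_NE_stable[st1 st2].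
have no_ip1 i : ~~ s1 i -> (forall j, s2 j) -> False.
  by move=> ip1 dp2; have := stable_ip_user_dp_other st1 ip1 dp2; lra.
have no_ip2 j : ~~ s2 j -> (forall i, s1 i) -> False.
  move=> ip2 dp1; have := stable_ip_user_dp_other st2 ip2 dp1.
  have : n2%:R * phi <= n1%:R * phi by rewrite ler_pM2r // ler_nat.
  have : 0 <= n2%:R * q * phi by rewrite !mulr_ge0 ?ler0n // ltW.
  have : 0 < q * mu by rewrite mulr_gt0 // (le_lt_trans _ lt_q) ?divr_ge0 ?ler0n.
  have : 0 <= qbar q * phi by rewrite mulr_ge0 ?qbar_ge0 // ltW.
  by rewrite /qbar; lra.
have no_ip12 i j : ~~ s1 i -> ~~ s2 j -> False.
  move=> ip1 ip2; have := stable_ip_users_both st1 st2 ip1 ip2.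
  have n_gt0 : 0 < (n1 + n2)%:R :> R.
    by rewrite ltr0n addn_gt0 (leq_ltn_trans _ (ndp_lt ip1)).
  by move: lt_q; rewrite ltr_pdivrMr // => /ltW; rewrite leNgt => /negP.
have dp2 j : s2 j.
  apply/negPn/negP => ip2; apply: (no_ip2 j ip2) => i.
  by apply/negPn/negP => /no_ip12/(_ ip2).
by split=> // i; apply/negPn/negP => /no_ip1/(_ dp2).
Qed.

End Stability.

Theorem corollary4 (R : realFieldType) (n1 n2 : nat) (phi mu q : R) :
  0 < phi -> 0 < mu -> 0 <= q <= 1 ->
  (n2 <= n1)%N ->
  n1%:R * qbar q < q * mu / phi + n2%:R + qbar q ->
  2 / (n1 + n2)%:R < q ->
  forall (s1 : {ffun 'I_n1 -> bool}) (s2 : {ffun 'I_n2 -> bool}),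
    is_NE phi mu q s1 s2 <-> ((forall i, s1 i) /\ (forall i, s2 i)).
Proof.
move=> phi_gt0 mu_gt0 /andP[q_ge0 q_le1] le_n21 lt_n1 lt_q s1 s2.
have balance : (n1%:R - 1) * qbar q * phi < n2%:R * phi + q * mu.
  by move: lt_n1; rewrite -(ltr_pM2r phi_gt0) !mulrDl divfK ?gt_eqF // /qbar; lra.
split; first exact: is_NE_all_dp.
by case; apply: all_dp_is_NE.
Qed.
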